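(* Let $G$ be a finite group and let $H,K$ be distinct subgroups of $G$. Then there is a simple $\mathbb CG$-module $W$ such that the space $W^H$ of $H$-invariants and the space $W^K$ of $K$-invariants are distinct. *)

From mathcomp Require Import all_boot all_order all_algebra all_fingroup all_solvable all_field all_character.

From mathcomp Require Import all_boot all_order all_algebra all_fingroup all_solvable all_field all_character.
Import GRing.Theory Num.Theory.
Local Open Scope group_scope.

(* The dimension of the H-fixed space of a representation W is the trace of
   the averaging idempotent over H, i.e. '[1_H, Res W], which by Frobenius
   reciprocity is the multiplicity of W in Ind_H^G 1.  If W^H = W^K for every
   simple W, then W^H = W^H :&: W^K = W^(H <*> K), so Ind 1_H = Ind 1_(H<*>K);
   comparing degrees gives |G : H| = |G : H <*> K|, hence H = H <*> K, and
   likewise K = H <*> K. *)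

Section TraceIdempotent.
Local Open Scope ring_scope.

Lemma mxtrace_pid_mx (R : pzSemiRingType) n r :
  (r <= n)%N -> \tr (pid_mx r : 'M[R]_n) = r%:R.
Proof.
move=> le_rn; rewrite /mxtrace (eq_bigr (fun i : 'I_n => if (i < r)%N then 1 else 0)).
  by rewrite -big_mkcond (big_ord_narrow le_rn) sumr_const card_ord.
by move=> i _; rewrite mxE eqxx; case: (i < r)%N.
Qed.

(* Writing P = L D U with L, U invertible and D = pid_mx (rank P), idempotency
   gives D (U L) D = D, whence tr P = tr (D (U L)) = tr (D (U L) D) = tr D. *)
Lemma mxtrace_idem (F : fieldType) n (P : 'M[F]_n) :
  P *m P = P -> \tr P = (\rank P)%:R.
Proof.
move=> idemP; have defP := mulmx_ebase P.
set L := col_ebase P in defP; set U := row_ebase P in defP.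
set D := pid_mx (\rank P) in defP.
have uL : L \in unitmx by apply: col_ebase_unit.
have uU : U \in unitmx by apply: row_ebase_unit.
have idemD : D *m D = D by rewrite pid_mx_id // rank_leq_row.
have DULD : D *m (U *m L) *m D = D.
  have := congr1 (fun A => invmx L *m A *m invmx U) idemP; rewrite /= -{1 2 3}defP.
  by rewrite !mulmxA mulVmx // mul1mx -!mulmxA !mulmxV // !mulmx1 !mulmxA.
have -> : \tr P = \tr (D *m (U *m L)).
  by rewrite -{1}defP mxtrace_mulC mulmxA mxtrace_mulC.
by rewrite -{1}idemD -mulmxA mxtrace_mulC DULD mxtrace_pid_mx // rank_leq_row.
Qed.

End TraceIdempotent.

Section AveragingProjector.

Variables (F : fieldType) (gT : finGroupType) (G H : {group gT}) (n : nat).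
Variable rG : mx_representation F G n.
Local Open Scope ring_scope.
Hypotheses (sHG : H \subset G) (nzH : (#|H|%:R : F) != 0).

Definition rfix_proj : 'M[F]_n := #|H|%:R^-1 *: \sum_(h in H) rG h.

Lemma rfix_projM x : x \in H -> rfix_proj *m rG x = rfix_proj.
Proof.
move=> Hx; rewrite /rfix_proj -scalemxAl mulmx_suml; congr (_ *: _).
rewrite [RHS](reindex_inj (mulIg x)) /=.
apply: eq_big => [h | h Hh]; first by rewrite groupMr.
by rewrite repr_mxM // (subsetP sHG).
Qed.

Lemma rfix_proj_sub : (rfix_proj <= rfix_mx rG H)%MS.
Proof. exact/rfix_mxP/rfix_projM. Qed.

Lemma rfix_proj_id {m} {W : 'M_(m, n)} :
  (W <= rfix_mx rG H)%MS -> W *m rfix_proj = W.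
Proof.
move/rfix_mxP=> fixW; rewrite /rfix_proj -scalemxAr mulmx_sumr.
rewrite (eq_bigr (fun _ => W)) => [|h /fixW //].
by rewrite sumr_const -scaler_nat scalerA mulVf // scale1r.
Qed.

Lemma mxrank_rfix_proj : \rank rfix_proj = \rank (rfix_mx rG H).
Proof.
apply/eqP; rewrite eqn_leq mxrankS ?rfix_proj_sub //.
by rewrite -{1}(rfix_proj_id (submx_refl _)) mxrankS ?submxMl.
Qed.

Lemma mxrank_rfix_mean :
  (\rank (rfix_mx rG H))%:R = #|H|%:R^-1 * \sum_(h in H) \tr (rG h).
Proof.
rewrite -mxrank_rfix_proj -mxtrace_idem; last exact/rfix_proj_id/rfix_proj_sub.
by rewrite mxtraceZ raddf_sum.
Qed.

End AveragingProjector.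

Section FixedPointsAndInduction.

Context {gT : finGroupType}.
Local Open Scope ring_scope.

Lemma cfdot_1_Res_cfRepr [G H : {group gT}] [n]
    (rG : mx_representation algC G n) :
  H \subset G -> '[1, 'Res[H] (cfRepr rG)] = (\rank (rfix_mx rG H))%:R.
Proof.
move=> sHG; have nzH : #|H|%:R != 0 :> algC by rewrite pnatr_eq0 -lt0n.
rewrite cfdotC -conjC_nat; congr (_^*).
rewrite cfdotE mxrank_rfix_mean //; congr (_ * _).
apply: eq_bigr => x Hx; rewrite cfResE // cfunE (subsetP sHG) // mulr1n.
by rewrite cfun1E Hx conjC1 mulr1.
Qed.

Lemma cfdot_cfInd1_irr [G H : {group gT}] (i : Iirr G) :
  H \subset G -> '['Ind[G] (1 : 'CF(H)), 'chi_i] = (\rank (rfix_mx 'Chi_i H))%:R.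
Proof. by move=> sHG; rewrite -Frobenius_reciprocity -irrRepr cfdot_1_Res_cfRepr. Qed.

Lemma subgroup_eq_rank_rfix [G M L : {group gT}] :
    M \subset L -> L \subset G ->
    (forall i : Iirr G, \rank (rfix_mx 'Chi_i M) = \rank (rfix_mx 'Chi_i L)) ->
  M :=: L.
Proof.
move=> sML sLG eq_rank; have sMG := subset_trans sML sLG.
have eqInd : 'Ind[G] (1 : 'CF(M)) = 'Ind[G] (1 : 'CF(L)).
  rewrite [LHS]cfun_sum_cfdot [RHS]cfun_sum_cfdot; apply: eq_bigr => i _.
  by rewrite !cfdot_cfInd1_irr ?eq_rank.
have /eqP := congr1 (fun phi : 'CF(G) => phi 1%g) eqInd.
rewrite !cfInd1 // !cfun11 !mulr1 eqr_nat => /eqP eq_index.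
rewrite (index1g sML) //; apply/eqP.
by rewrite -(eqn_pmul2l (indexg_gt0 G L)) muln1 Lagrange_index // eq_index.
Qed.

Lemma rfix_mx_joing [F : fieldType] [G H K : {group gT}] [n]
    (rG : mx_representation F G n) :
  H \subset G -> K \subset G ->
  (rfix_mx rG (H <*> K) :=: rfix_mx rG H :&: rfix_mx rG K)%MS.
Proof.
move=> sHG sKG; have sJG : H <*> K \subset G by rewrite join_subG sHG.
apply/eqmxP; rewrite sub_capmx !rfix_mxS ?joing_subl ?joing_subr //=.
by rewrite -rfix_mx_rstabC // join_subG !rfix_mx_rstabC ?capmxSl ?capmxSr.
Qed.

Lemma rfix_irr_inj [G H K : {group gT}] :
    H \subset G -> K \subset G ->
    (forall i : Iirr G, (rfix_mx 'Chi_i H == rfix_mx 'Chi_i K)%MS) ->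
  H :=: K.
Proof.
move=> sHG sKG eq_rfix; have sJG : H <*> K \subset G by rewrite join_subG sHG.
have rfix_join (i : Iirr G) : (rfix_mx 'Chi_i (H <*> K) :=: rfix_mx 'Chi_i H)%MS.
  apply: (eqmx_trans (rfix_mx_joing 'Chi_i sHG sKG)); apply/capmx_idPl.
  by have /andP[] := eq_rfix i.
have eqHJ : H :=: H <*> K.
  apply: subgroup_eq_rank_rfix (joing_subl H K) sJG _ => i.
  by rewrite (rfix_join i).
have eqKJ : K :=: H <*> K.
  apply: subgroup_eq_rank_rfix (joing_subr H K) sJG _ => i.
  by rewrite (rfix_join i) (eqmx_rank (eq_rfix i)).
by rewrite [LHS]eqHJ [RHS]eqKJ.
Qed.

End FixedPointsAndInduction.

(* A simple CG-module W is an irreducible matrix representation of G over algC;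
   W^H is the row space rfix_mx rG H of H-fixed vectors. *)
Theorem lemma3p2 (gT : finGroupType) (G H K : {group gT})
  (sHG : H \subset G) (sKG : K \subset G) (neHK : H != K) :
  exists (n : nat) (rG : mx_representation algC G n),
    mx_irreducible rG /\ ~~ (rfix_mx rG H == rfix_mx rG K)%MS.
Proof.
have [i neq_rfix] : exists i : Iirr G, ~~ (rfix_mx 'Chi_i H == rfix_mx 'Chi_i K)%MS.
  apply/existsP; apply: contraNT neHK; rewrite negb_exists => /forallP eq_rfix.
  by apply/eqP/group_inj/(rfix_irr_inj sHG sKG) => i; apply/negbNE/eq_rfix.
by exists _, 'Chi_i; split=> //; apply: socle_irr.
Qed.
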